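(* Let $q\ge 3$ be a prime power and $s,t$ integers with $1\le s<t\le q$ and $t-s\ge 2$. Then there exists a linear AOA$(s,t,q+1,q)$.
   Context: An orthogonal array OA$(t,k,v)$ (with $1\le t\le k$) is a $v^t\times k$ array with entries from a set $X$ of size $v$ such that, for every choice of $t$ of its columns, each $t$-tuple in $X^t$ appears exactly once as a row of the corresponding $v^t\times t$ subarray. For integers $1\le s\le t\le k$, an augmented orthogonal array AOA$(s,t,k,v)$ is a $v^t\times(k+1)$ array $A$ such that: (1) the first $k$ columns of $A$ form an OA$(t,k,v)$ on a symbol set $X$ of size $v$; (2) the last column of $A$ has entries from a set $Y$ of size $v^{t-s}$; (3) for any choice of $s$ of the first $k$ columns, these $s$ columns together with the last column contain every $(s+1)$-tuple of $X^s\times Y$ exactly once as a row. For a prime power $q$, an AOA$(s,t,k,q)$ is linear if $X=\mathbb{F}_q$, $Y=\mathbb{F}_q^{t-s}$, and its set of rows, regarded as vectors in $\mathbb{F}_q^{k}\times\mathbb{F}_q^{t-s}=\mathbb{F}_q^{k+t-s}$, is an $\mathbb{F}_q$-linear subspace. *)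

From HB Require Import structures.
From mathcomp Require Import all_boot all_order all_algebra all_field.
Set Implicit Arguments. Unset Strict Implicit. Unset Printing Implicit Defensive.
Import GRing.Theory.
Local Open Scope ring_scope.

(* Rows of the array are vectors in F^k x F^(t-s) = F^(k + (t-s)); the first k
   coordinates (lshift) are the OA columns, the last t-s (rshift) encode the
   symbol of the last column, an element of Y = F^(t-s). Since the rows of a linear AOA form a set, "appears
   exactly once" means "exactly one row of S has these entries". *)
Definition is_linear_AOA (F : finFieldType) (s t k : nat)
    (S : {set 'rV[F]_(k + (t - s))}) : Prop :=
  [/\ [/\ (1 <= s)%N, (s <= t)%N & (t <= k)%N],
      (0 \in S) /\ (forall (a : F) u v, u \in S -> v \in S -> a *: u + v \in S),
      #|S| = (#|F| ^ t)%N,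
      (forall c : 'I_t -> 'I_k, injective c -> forall x : 'I_t -> F,
         #|[set r in S | [forall i, r 0 (lshift (t - s) (c i)) == x i]]| = 1%N)
    &
      (forall c : 'I_s -> 'I_k, injective c -> forall (x : 'I_s -> F)
         (y : 'rV[F]_(t - s)),
         #|[set r in S | [forall i, r 0 (lshift (t - s) (c i)) == x i]
                        && [forall j, r 0 (rshift k j) == y 0 j]]| =  1%N)].
Arguments is_linear_AOA {F} s t k S.

From HB Require Import structures.
From mathcomp Require Import all_boot all_order all_algebra all_field.
Set Implicit Arguments. Unset Strict Implicit. Unset Printing Implicit Defensive.
Import GRing.Theory.
Local Open Scope ring_scope.

(* Take as rows the codewords of the doubly extended Reed-Solomon code: messages are
   polynomials of degree < t, evaluated at the q + 1 points of the projective line,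
   and the last column is the residue of the message modulo a polynomial m of degree
   t - s without roots in F.  A message that vanishes on s of the point columns and
   has residue 0 is divisible by m and by s coprime linear factors (one fewer, but
   with degree dropping by one, if the point at infinity is among them), so it has
   too many "roots" and is zero.  Hence the projection of the code onto those columns
   is injective, and since both sides have q^t elements, it is bijective; the OA
   property is the same argument with m = 1.  A root-free m of degree d exists for
   every d >= 2, which is where t - s >= 2 is used. *)

Lemma not_injective_not_onto (T : finType) (f : T -> T) (x y : T) :
  x != y -> f x = f y -> exists b, b \notin codom f.
Proof.
move=> neq_xy eq_fxy; apply/existsP; rewrite -negb_forall.
apply: contra neq_xy => /forallP onto_f.
have /image_injP inj_f : #|codom f| == #|T|.
  by rewrite eqn_leq max_card; apply/subset_leq_card/subsetP=> b _; apply: onto_f.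
exact/eqP/inj_f.
Qed.

Lemma card_fiber_image (T U V : finType) (f : T -> U) (g : U -> V) (v : V) :
  injective (g \o f) -> (#|V| <= #|T|)%N ->
  #|[set u in [set f x | x : T] | g u == v]| = 1%N.
Proof.
move=> inj_gf card_V; have /codomP [x ->] := inj_card_onto inj_gf card_V v.
rewrite -(cards1 (f x)); apply: eq_card => u; rewrite !inE.
apply/andP/eqP => [[/imsetP [y _ ->] /eqP /inj_gf -> //] | ->].
by rewrite imset_f ?inE.
Qed.

Lemma row_eqE (R : eqType) (n : nat) (u v : 'rV[R]_n) :
  (u == v) = [forall j, u 0 j == v 0 j].
Proof.
apply/eqP/forallP => [-> j // | eq_uv]; apply/rowP => j; exact/eqP.
Qed.

Lemma leq_size_coef_pred (R : nzSemiRingType) (p : {poly R}) (n : nat) :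
  (size p <= n)%N -> p`_n.-1 = 0 -> (size p <= n.-1)%N.
Proof.
move=> size_p coef0; apply/leq_sizeP => j; rewrite leq_eqVlt => /predU1P [<- //|lt_j].
by apply: (leq_sizeP _ _ size_p); case: n {size_p coef0} lt_j.
Qed.

Section RootlessPolynomials.
Variable F : finFieldType.

Lemma rootless_dvdp_eq0 (m p : {poly F}) (A : {set F}) :
  (forall a, ~~ root m a) -> m %| p -> {in A, forall a, root p a} ->
  (size p <= (size m).-1 + #|A|)%N -> p = 0.
Proof.
move=> m_rootless dvd_mp rootA; apply: contraTeq => nz_p.
have nz_m : m != 0 by apply: contraNneq (m_rootless 0) => ->; rewrite root0.
have nz_pm : p %/ m != 0 by apply: contraNneq nz_p => pm0; rewrite -(divpK dvd_mp) pm0 mul0r.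
have rootA_pm : all (root (p %/ m)) (enum A).
  apply/allP=> a; rewrite mem_enum => /rootA.
  by rewrite -{1}(divpK dvd_mp) rootM (negPf (m_rootless a)) orbF.
have := max_poly_roots nz_pm rootA_pm (enum_uniq _).
by rewrite -cardE size_divp // -ltnNge ltn_subRL addnC.
Qed.

(* [1 + c X^(d-1) (X - 1)] with [-1/c] outside the range of [a |-> a^(d-1) (a - 1)];
   that range misses something because the map identifies [0] and [1]. *)
Lemma exists_rootless_poly (d : nat) : (2 <= d)%N ->
  exists m : {poly F}, size m = d.+1 /\ forall a, ~~ root m a.
Proof.
move=> d_ge2; pose f (a : F) := a ^+ d.-1 * (a - 1).
have f0 : f 0 = 0 by rewrite /f expr0n -(subnKC d_ge2) mul0r.
have f1 : f 1 = 0 by rewrite /f subrr mulr0.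
have [b fNb] := not_injective_not_onto (oner_neq0 F) (etrans f1 (esym f0)).
have nz_b : b != 0 by apply: contraNneq fNb => ->; rewrite -f0 codom_f.
pose c : F := - b^-1.
have nz_c : c != 0 by rewrite oppr_eq0 invr_eq0.
have size_cbody : size (c *: ('X^(d.-1) * ('X - 1)) : {poly F}) = d.+1.
  rewrite size_scale // size_mul ?monic_neq0 ?monicXn -?polyC1 ?monicXsubC //.
  by rewrite size_polyXn size_XsubC addn2 -(subnKC d_ge2).
have size_lt : (size (1%R : {poly F}) < size (c *: ('X^(d.-1) * ('X - 1))))%N.
  by rewrite size_cbody -polyC1 size_polyC oner_neq0 ltnS ltnW.
exists (1 + c *: ('X^(d.-1) * ('X - 1))); split; first by rewrite addrC (size_polyDl size_lt).
move=> a; rewrite /root.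
have -> : (1 + c *: ('X^(d.-1) * ('X - 1))).[a] = 1 + c * f a.
  by rewrite hornerD hornerC hornerZ hornerM hornerXn hornerXsubC.
rewrite addrC addr_eq0 /c mulNr eqr_opp; apply: contra fNb => /eqP fa.
by apply/codomP; exists a; rewrite -[f a](mulKf (invr_neq0 nz_b)) invrK fa mulr1.
Qed.

End RootlessPolynomials.

Section ExtendedEvaluation.
Variables (F : finFieldType) (t : nat).
Local Notation q := #|F|.

(* The [q + 1] columns are the points of the projective line: column [point_col a]
   evaluates at [a], and column [ord_max] is the point at infinity, which reads the
   coefficient of [X^(t-1)] of a polynomial of size at most [t]. *)
Definition point_col (a : F) : 'I_q.+1 := lift ord_max (enum_rank a).

Definition ext_eval (p : {poly F}) (j : 'I_q.+1) : F :=
  if unlift ord_max j is Some k then p.[enum_val k] else p`_t.-1.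

Lemma ext_eval_point p a : ext_eval p (point_col a) = p.[a].
Proof. by rewrite /ext_eval liftK enum_rankK. Qed.

Lemma ext_eval_infty p : ext_eval p ord_max = p`_t.-1.
Proof. by rewrite /ext_eval unlift_none. Qed.

Lemma ext_evalB p r j : ext_eval (p - r) j = ext_eval p j - ext_eval r j.
Proof. by rewrite /ext_eval; case: unlift => [k|]; rewrite ?hornerD ?hornerN ?coefB. Qed.

Lemma ext_evalP a p r j : ext_eval (a *: p + r) j = a * ext_eval p j + ext_eval r j.
Proof. by rewrite /ext_eval; case: unlift => [k|]; rewrite ?hornerD ?hornerZ ?coefD ?coefZ. Qed.

Lemma card_point_col_preim (C : {set 'I_q.+1}) :
  (#|C| <= (ord_max \in C) + #|point_col @^-1: C|)%N.
Proof.
have inj_point_col : injective point_col by move=> a b /lift_inj/enum_rank_inj.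
rewrite (cardsD1 ord_max) leq_add2l -(card_imset _ inj_point_col).
apply/subset_leq_card/subsetP => j; rewrite !inE eq_sym => /andP [/unlift_some [k -> _] C_j].
by apply/imsetP; exists (enum_val k); rewrite /point_col ?inE enum_valK.
Qed.

Lemma ext_eval_eq0 (C : {set 'I_q.+1}) (m p : {poly F}) :
  (forall a, ~~ root m a) -> m %| p -> (size p <= t)%N -> (t <= (size m).-1 + #|C|)%N ->
  {in C, forall j, ext_eval p j = 0} -> p = 0.
Proof.
move=> m_rootless dvd_mp size_p t_le p_vanish.
apply: (rootless_dvdp_eq0 (A := point_col @^-1: C)) => // [a|].
  by rewrite inE => /p_vanish; rewrite ext_eval_point => /eqP.
have {t_le} := leq_trans t_le (leq_add (leqnn _) (card_point_col_preim C)).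
case: (boolP (ord_max \in C)) => [C_infty|_] /= t_le; last exact: leq_trans size_p t_le.
have /leq_trans -> // : (size p <= t.-1)%N.
  by apply: leq_size_coef_pred; rewrite -?ext_eval_infty ?p_vanish.
by rewrite -subn1 leq_subLR addnCA.
Qed.

Lemma ext_eval_modp_inj (C : {set 'I_q.+1}) (m : {poly F}) (u w : 'rV[F]_t) :
  (forall a, ~~ root m a) -> (t <= (size m).-1 + #|C|)%N ->
  {in C, forall j, ext_eval (rVpoly u) j = ext_eval (rVpoly w) j} ->
  rVpoly u %% m = rVpoly w %% m -> u = w.
Proof.
move=> m_rootless t_le eq_eval eq_mod; apply/eqP; rewrite -subr_eq0; apply/eqP.
have dvd_m : m %| rVpoly (u - w) by rewrite linearB /dvdp modpD modpN eq_mod subrr.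
have vanish : {in C, forall j, ext_eval (rVpoly (u - w)) j = 0}.
  by move=> j C_j; rewrite linearB ext_evalB eq_eval // subrr.
by rewrite -[u - w]rVpolyK (ext_eval_eq0 m_rootless dvd_m (size_poly _ _) t_le vanish) linear0.
Qed.

End ExtendedEvaluation.

Section Codeword.
Variables (F : finFieldType) (s t : nat) (m : {poly F}).
Local Notation q := #|F|.

Definition codeword (v : 'rV[F]_t) : 'rV[F]_(q.+1 + (t - s)) :=
  row_mx (\row_j ext_eval t (rVpoly v) j) (poly_rV (rVpoly v %% m)).

Fact codeword_is_linear : linear codeword.
Proof.
move=> a u v; rewrite /codeword scale_row_mx add_row_mx !linearP; congr row_mx.
  by apply/rowP => j; rewrite !mxE ext_evalP.
by rewrite modpD modpZl linearP.
Qed.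

HB.instance Definition _ := GRing.isLinear.Build F 'rV[F]_t 'rV[F]_(q.+1 + (t - s))
  *:%R codeword codeword_is_linear.

Lemma codeword_lshift v j : codeword v 0 (lshift (t - s) j) = ext_eval t (rVpoly v) j.
Proof. by rewrite row_mxEl mxE. Qed.

Lemma row_codeword_lshift n (c : 'I_n -> 'I_q.+1) v :
  \row_i codeword v 0 (lshift (t - s) (c i)) = \row_i ext_eval t (rVpoly v) (c i).
Proof. by apply/rowP => i; rewrite mxE [RHS]mxE codeword_lshift. Qed.

Lemma rsubmx_codeword v : rsubmx (codeword v) = poly_rV (rVpoly v %% m).
Proof. exact: row_mxKr. Qed.

Lemma card_codeword_image : (t <= q.+1)%N -> #|[set codeword v | v : 'rV_t]| = (q ^ t)%N.
Proof.
move=> t_le_q; rewrite card_imset ?card_mx ?mul1n // => u w eq_uw.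
apply: (ext_eval_modp_inj (C := setT) (m := 1)); rewrite ?modp1 //.
- exact: root1.
- by rewrite size_poly1 cardsT card_ord.
- by move=> j _; rewrite -!codeword_lshift eq_uw.
Qed.

Lemma card_codeword_OA_fiber (c : 'I_t -> 'I_q.+1) (x : 'I_t -> F) : injective c ->
  #|[set r in [set codeword v | v : 'rV_t] |
      [forall i, r 0 (lshift (t - s) (c i)) == x i]]| = 1%N.
Proof.
move=> inj_c; pose g (r : 'rV[F]_(q.+1 + (t - s))) := \row_i r 0 (lshift (t - s) (c i)).
transitivity #|[set r in [set codeword v | v : 'rV_t] | g r == \row_i x i]|.
  by apply: eq_card => r; rewrite !inE row_eqE; congr andb; apply: eq_forallb => i; rewrite !mxE.
apply: card_fiber_image; last by rewrite !card_mx.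
move=> u w; rewrite /= /g !row_codeword_lshift => /rowP eq_uw.
apply: (ext_eval_modp_inj (C := c @: setT) (m := 1)); rewrite ?modp1 //.
- exact: root1.
- by rewrite size_poly1 card_imset // cardsT card_ord.
- by move=> _ /imsetP [i _ ->]; move: (eq_uw i); rewrite !mxE.
Qed.

Hypotheses (m_rootless : forall a, ~~ root m a) (size_m : size m = (t - s).+1).
Hypothesis s_le_t : (s <= t)%N.

Lemma card_codeword_AOA_fiber (c : 'I_s -> 'I_q.+1) (x : 'I_s -> F) (y : 'rV[F]_(t - s)) :
  injective c ->
  #|[set r in [set codeword v | v : 'rV_t] |
      [forall i, r 0 (lshift (t - s) (c i)) == x i]
      && [forall j, r 0 (rshift q.+1 j) == y 0 j]]| = 1%N.
Proof.
move=> inj_c.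
pose g (r : 'rV[F]_(q.+1 + (t - s))) := (\row_i r 0 (lshift (t - s) (c i)), rsubmx r).
transitivity #|[set r in [set codeword v | v : 'rV_t] | g r == (\row_i x i, y)]|.
  apply: eq_card => r; rewrite !inE xpair_eqE !row_eqE.
  by congr [&& _, _ & _]; apply: eq_forallb => i; rewrite !mxE.
apply: card_fiber_image; last by rewrite card_prod !card_mx !mul1n -expnD subnKC.
move=> u w /eqP; rewrite xpair_eqE !row_codeword_lshift => /andP [/eqP /rowP eq_uw /eqP].
rewrite !rsubmx_codeword => /(congr1 rVpoly).
have size_mod (p : {poly F}) : (size (p %% m)%R <= t - s)%N.
  by rewrite -ltnS -size_m ltn_modpN0 // -size_poly_eq0 size_m.
rewrite !poly_rV_K // => eq_mod.
apply: (ext_eval_modp_inj (C := c @: setT) m_rootless _ _ eq_mod).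
- by rewrite size_m card_imset // cardsT card_ord subnK.
- by move=> _ /imsetP [i _ ->]; move: (eq_uw i); rewrite !mxE.
Qed.

End Codeword.

Theorem theorem3p7 (F : finFieldType) (s t : nat) :
  (3 <= #|F|)%N -> (1 <= s)%N -> (s < t)%N -> (t <= #|F|)%N -> (2 <= t - s)%N ->
  exists S : {set 'rV[F]_(#|F|.+1 + (t - s))}, is_linear_AOA s t #|F|.+1 S.
Proof.
(* [3 <= q] is implied by the other hypotheses. *)
move=> _ s_ge1 lt_st t_le_q d_ge2.
have [m [size_m m_rootless]] := exists_rootless_poly F d_ge2.
exists [set codeword s m v | v : 'rV_t]; split.
- by rewrite s_ge1 ltnW // leqW.
- split; first by rewrite -(linear0 (codeword s m)) imset_f.
  by move=> a _ _ /imsetP [u _ ->] /imsetP [v _ ->]; rewrite -linearP imset_f.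
- exact/card_codeword_image/leqW.
- by move=> c inj_c x; apply: card_codeword_OA_fiber.
- by move=> c inj_c x y; apply: card_codeword_AOA_fiber => //; apply: ltnW.
Qed.
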